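(* Consider the following multi-cell downlink scheduling model. Time is slotted, $t=1,2,\ldots$. There are $N$ user equipments $\mathrm{UE}_1,\ldots,\mathrm{UE}_N$ and $M$ base stations $\mathrm{BS}_1,\ldots,\mathrm{BS}_M$, each base station covering one cell. At every slot $t$, each $\mathrm{UE}_i$ lies in the cell of exactly one base station, denoted $C_i(t)\in\{1,\ldots,M\}$. Assume i.i.d. uniform mobility: the random variables $C_i(t)$ are independent across users $i$ and slots $t$, each uniformly distributed on $\{1,\ldots,M\}$. At each slot, each $\mathrm{BS}_j$ may attempt a transmission of a fresh packet to at most one UE currently in its cell (i.e. a UE with $C_i(t)=j$). A transmission attempted to $\mathrm{UE}_i$ succeeds with probability $p_i$, independently of everything else; assume statistically identical UEs, $p_i=p\in(0,1]$ for all $i$. The age of information $h_i(t)$ of $\mathrm{UE}_i$ evolves as $h_i(t+1)=1$ if $\mathrm{UE}_i$ was scheduled at slot $t$ and the transmission succeeded, and $h_i(t+1)=h_i(t)+1$ otherwise. For a causal (online) scheduling policy $\pi$, its average AoI is $\mathsf{AoI}^{\pi}=\limsup_{T\to\infty}\frac{1}{NT}\sum_{t=1}^{T}\sum_{i=1}^{N}\mathbb{E}^{\pi}[h_i(t)]$, and $\mathsf{AoI}^*$ denotes the infimum of $\mathsf{AoI}^\pi$ over all such policies. Let $\pi^{\mathsf{MMW}}$ be the policy under which, at every slot $t$, each base station schedules, among the UEs in its cell, one with the largest index $I_i(t)=p_i h_i(t)^2$. Then $\pi^{\mathsf{MMW}}$ is a $2$-approximation, i.e. $\mathsf{AoI}^{\pi^{\mathsf{MMW}}}\le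 2\,\mathsf{AoI}^*$.
   Context: A scheduling policy is causal/online if its decision at each slot depends only on the history of ages, cell occupancies and scheduling decisions observed so far (together with the current cell occupancy). The stationary cell-occupancy distribution in the i.i.d. uniform mobility model is $\psi_{ij}=1/M$ for all $i,j$. A base station whose cell contains no UE makes no transmission. *)

From HB Require Import structures.
From mathcomp Require Import all_boot all_order all_algebra.
From mathcomp Require Import all_classical all_reals all_analysis.
Set Implicit Arguments. Unset Strict Implicit. Unset Printing Implicit Defensive.
Import Order.TTheory GRing.Theory Num.Theory.
Local Open Scope ring_scope.

Definition cellv (N M : nat) := {ffun 'I_N -> 'I_M}.
(* A decision d j = Some i only has an effect if UE i is in cell j,
   i.e. UE i is scheduled at the slot iff d (c i) = Some i. *)
Definition decv (N M : nat) := {ffun 'I_M -> option 'I_N}.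
Definition agev (N : nat) := {ffun 'I_N -> nat}.
Definition hist (N M : nat) := seq (cellv N M * decv N M * agev N).

(* A (possibly randomized) causal policy: given the history, the current ages
   and the current cell occupancy, a probability weight on decisions. *)
Definition policy (R : realType) (N M : nat) :=
  hist N M -> agev N -> cellv N M -> decv N M -> R.

Definition is_policy (R : realType) (N M : nat) (pi : policy R N M) : Prop :=
  forall (H : hist N M) (a : agev N) (c : cellv N M),
    (forall d, 0 <= pi H a c d) /\ \sum_(d : decv N M) pi H a c d = 1.

Definition scheduled (N M : nat) (c : cellv N M) (d : decv N M) (i : 'I_N) : bool :=
  d (c i) == Some i.

Definition next_ages (N M : nat) (a : agev N) (c : cellv N M) (d : decv N M)
  (s : {ffun 'I_N -> bool}) : agev N :=
  [ffun i => if scheduled c d i && s i then 1%N else (a i).+1].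

Definition succ_weight (R : realType) (N : nat) (p : R) (s : {ffun 'I_N -> bool}) : R :=
  \prod_(i < N) (if s i then p else 1 - p).

(* Expectation of f(history, ages) after n further slots, starting from the
   history H and current ages a, under policy pi, with i.i.d. uniform mobility
   (each occupancy vector has probability 1/M^N) and success probability p. *)
Fixpoint expect_from (R : realType) (N M : nat) (p : R) (pi : policy R N M)
  (n : nat) (H : hist N M) (a : agev N) (f : hist N M -> agev N -> R) : R :=
  match n with
  | 0%N => f H a
  | n'.+1 =>
      \sum_(c : cellv N M) ((M ^ N)%:R)^-1 *
        \sum_(d : decv N M) pi H a c d *
          \sum_(s : {ffun 'I_N -> bool}) succ_weight p s *
            expect_from p pi n' (rcons H (c, d, a)) (next_ages a c d s) f
  end.

(* E^pi[h_i(t)], with h(1) = h0 the initial ages. *)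
Definition exp_age (R : realType) (N M : nat) (p : R) (pi : policy R N M)
  (h0 : agev N) (i : 'I_N) (t : nat) : R :=
  expect_from p pi t.-1 [::] h0 (fun _ a => (a i)%:R).

Definition avg_AoI (R : realType) (N M : nat) (p : R) (pi : policy R N M)
  (h0 : agev N) : \bar R :=
  limn_esup (fun T : nat =>
    ((N * T)%:R^-1 * \sum_(1 <= t < T.+1) \sum_(i < N) exp_age p pi h0 i t)%:E).

Definition opt_AoI (R : realType) (N M : nat) (p : R) (h0 : agev N) : \bar R :=
  ereal_inf [set avg_AoI p pi h0 | pi in [set pi : policy R N M | is_policy pi]].

(* pi is a Max-Weight (MMW) policy: with probability one, every BS whose cell
   is nonempty schedules a UE of its cell with largest index p * h_i^2
   (any tie-breaking, possibly randomized, is allowed). *)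
Definition is_MMW (R : realType) (N M : nat) (p : R) (pi : policy R N M) : Prop :=
  forall (H : hist N M) (a : agev N) (c : cellv N M) (d : decv N M),
    pi H a c d != 0 ->
    forall j : 'I_M, (exists k, c k = j) ->
      exists i : 'I_N, [/\ d j = Some i, c i = j &
        forall k : 'I_N, c k = j -> p * ((a k)%:R ^+ 2) <= p * ((a i)%:R ^+ 2)].

From HB Require Import structures.
From mathcomp Require Import all_boot all_order all_algebra.
From mathcomp Require Import all_classical all_reals all_analysis.
From mathcomp Require Import fingroup perm ring lra.
Import Order.TTheory GRing.Theory Num.Theory.
Local Open Scope ring_scope.
Set Implicit Arguments. Unset Strict Implicit. Unset Printing Implicit Defensive.

(* Let gamma = E[1 / #(UEs in the cell of UE i)] under uniform mobility; by
   symmetry it does not depend on i.  A base station serves at most one UE of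
   its cell, so under any policy the expected number of UEs scheduled per slot
   is at most N gamma.  The drift of the Lyapunov function
   V(h) = sum_i (h_i^2 - 2 (lam + 1) h_i) with lam = 1 / (p gamma) then yields
   AoI^pi >= (1 / (p gamma) + 1) / 2 for every policy.  Under MMW each base
   station serves the oldest UE of its cell, whose age is at least the average
   age in that cell; hence E[sum_i h_i(t+1)] <= (1 - p gamma) E[sum_i h_i(t)] + N,
   and averaging over time gives AoI^MMW <= 1 / (p gamma) <= 2 AoI^*. *)

Section WeightedSums.
Variables (R : numDomainType) (I : finType) (w : I -> R).

Lemma wsumr_affine (f g : I -> R) k :
  \sum_x w x * (k * f x + g x) = k * \sum_x w x * f x + \sum_x w x * g x.
Proof. by rewrite mulr_sumr -big_split; apply: eq_bigr => x _ /=; ring. Qed.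

Lemma wsumr_const k : \sum_x w x = 1 -> \sum_x w x * k = k.
Proof. by rewrite -mulr_suml => ->; rewrite mul1r. Qed.

Hypothesis w_ge0 : forall x, 0 <= w x.

Lemma ler_wsum (f g : I -> R) :
  (forall x, f x <= g x) -> \sum_x w x * f x <= \sum_x w x * g x.
Proof. by move=> fg; apply: ler_sum => x _; apply: ler_wpM2l. Qed.

Lemma wsumr_ge0 (f : I -> R) : (forall x, 0 <= f x) -> 0 <= \sum_x w x * f x.
Proof. by move=> f0; apply: sumr_ge0 => x _; apply: mulr_ge0. Qed.

End WeightedSums.

Section Limsup.
Variable R : realType.

Lemma div_nat_le_eventually (K e : R) : 0 < e ->
  exists n0, forall k, (n0 <= k)%N -> `|K| / k%:R <= e.
Proof.
move=> e_gt0; exists (Num.bound (`|K| / e)).+1 => k n0k.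
have k_gt0 : 0 < k%:R :> R by rewrite ltr0n (leq_trans _ n0k).
rewrite ler_pdivrMr // mulrC -ler_pdivrMr //; apply/ltW/(lt_le_trans (archi_boundP _)).
  by rewrite divr_ge0 // ltW.
by rewrite ler_nat ltnW.
Qed.

Lemma limn_esup_le_inv_nat (u : nat -> R) (x K : R) :
  (forall k, (0 < k)%N -> u k <= x + K / k%:R) ->
  (limn_esup (fun k => (u k)%:E) <= x%:E)%E.
Proof.
move=> ub; rewrite limn_esup_lim; apply/lee_addgt0Pr => e e_gt0.
have [n0 small] := div_nat_le_eventually K e_gt0.
apply: lime_le; first exact: is_cvg_esups.
exists n0.+1 => // n /= n0n; apply: ge_ereal_sup => _ [k /= nk <-].
have n0k : (n0 < k)%N := leq_trans n0n nk.
rewrite -EFinD lee_fin (le_trans (ub k (leq_ltn_trans (leq0n _) n0k))) // lerD2l.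
apply: le_trans (small k (ltnW n0k)); apply: ler_wpM2r; last exact: ler_norm.
by rewrite invr_ge0.
Qed.

Lemma limn_esup_ge_inv_nat (u : nat -> R) (x K : R) :
  (forall k, (0 < k)%N -> x - K / k%:R <= u k) ->
  (x%:E <= limn_esup (fun k => (u k)%:E))%E.
Proof.
move=> lb; rewrite limn_esup_lim; apply/lee_subgt0Pr => e e_gt0.
have [n0 small] := div_nat_le_eventually K e_gt0.
apply: lime_ge; first exact: is_cvg_esups.
apply: nearW => n; pose k := maxn n n0.+1.
have n0k : (n0 < k)%N by rewrite leq_maxr.
apply: (@le_trans _ _ (u k)%:E); last first.
  by apply: ereal_sup_ubound; exists k => //=; rewrite leq_maxl.
rewrite -EFinB lee_fin (le_trans _ (lb k (leq_ltn_trans (leq0n _) n0k))) // lerD2l lerN2.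
apply: le_trans (small k (ltnW n0k)); apply: ler_wpM2r; last exact: ler_norm.
by rewrite invr_ge0.
Qed.

End Limsup.

Section SuccessPattern.
Variables (R : realType) (N : nat) (p : R).

Lemma sum_ffun_bool_prod (G : 'I_N -> bool -> R) :
  \sum_(s : {ffun 'I_N -> bool}) \prod_k G k (s k) = \prod_k (G k true + G k false).
Proof. by rewrite -bigA_distr_bigA; apply: eq_bigr => k _; rewrite big_bool. Qed.

Lemma sum_succ_weight : \sum_(s : {ffun 'I_N -> bool}) succ_weight p s = 1.
Proof.
rewrite /succ_weight (sum_ffun_bool_prod (fun k b => if b then p else 1 - p)).
by rewrite big1 // => k _; rewrite addrC subrK.
Qed.

Lemma succ_weight_ge0 (s : {ffun 'I_N -> bool}) :
  0 <= p -> p <= 1 -> 0 <= succ_weight p s.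
Proof.
by move=> p_ge0 p_le1; apply: prodr_ge0 => k _; case: (s k); rewrite ?subr_ge0.
Qed.

Lemma succ_weight_marginal i (F : bool -> R) :
  \sum_(s : {ffun 'I_N -> bool}) succ_weight p s * F (s i) =
  p * F true + (1 - p) * F false.
Proof.
pose G k b := (if b then p else 1 - p) * (if k == i then F b else 1).
transitivity (\sum_(s : {ffun 'I_N -> bool}) \prod_k G k (s k)).
  apply: eq_bigr => s _; rewrite /G /succ_weight big_split /=; congr (_ * _).
  by rewrite (bigD1 i) //= eqxx big1 ?mulr1 // => k /negbTE ->.
rewrite sum_ffun_bool_prod (bigD1 i) //= big1 ?mulr1 /G ?eqxx //.
by move=> k /negbTE ->; rewrite !mulr1 addrC subrK.
Qed.

End SuccessPattern.

Section Cells.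
Variables (R : realType) (N M : nat).
Implicit Types (c : cellv N M) (d : decv N M) (a : agev N).

Lemma sum_uniform_cellv :
  (0 < M)%N -> \sum_(c : cellv N M) ((M ^ N)%:R)^-1 = 1 :> R.
Proof.
move=> M_gt0; rewrite sumr_const card_ffun !card_ord -[LHS]mulr_natr mulVf //.
by rewrite pnatr_eq0 expn_eq0 eqn0Ngt M_gt0.
Qed.

Definition cell_load c (j : 'I_M) : nat := #|[set l | c l == j]|.

Lemma cell_load_gt0 c i : (0 < cell_load c (c i))%N.
Proof. by apply/card_gt0P; exists i; rewrite inE. Qed.

Lemma cell_load_le c j : (cell_load c j <= N)%N.
Proof. by rewrite -[X in (_ <= X)%N]card_ord max_card. Qed.

Lemma cell_loadE c j : (cell_load c j)%:R = \sum_(l | c l == j) 1 :> R.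
Proof.
by rewrite /cell_load -sum1_card natr_sum; apply: eq_bigl => l; rewrite inE.
Qed.

Lemma sum_inv_cell_load c i :
  \sum_(l | c l == c i) ((cell_load c (c l))%:R)^-1 = 1 :> R.
Proof.
rewrite (eq_bigr (fun _ => 1 * ((cell_load c (c i))%:R)^-1)) => [|l /eqP ->];
  last by rewrite mul1r.
by rewrite -mulr_suml -cell_loadE mulfV // pnatr_eq0 -lt0n cell_load_gt0.
Qed.

Definition inv_load_mean (i : 'I_N) : R :=
  \sum_(c : cellv N M) ((M ^ N)%:R)^-1 * ((cell_load c (c i))%:R)^-1.

Lemma inv_load_mean_sym i k : inv_load_mean i = inv_load_mean k.
Proof.
pose sw c : cellv N M := [ffun l => c (tperm i k l)].
have swK : involutive sw by move=> c; apply/ffunP => l; rewrite !ffunE tpermK.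
rewrite /inv_load_mean (reindex_inj (inv_inj swK)); apply: eq_bigr => c _.
congr (_ / _%:R); rewrite /cell_load.
rewrite -[RHS](card_preimset _ (@perm_inj _ (tperm i k))).
by apply: eq_card => l; rewrite !inE !ffunE tpermL.
Qed.

Lemma inv_load_mean_gt0 i : (0 < M)%N -> 0 < inv_load_mean i.
Proof.
move=> M_gt0; have N_gt0 : (0 < N)%N := leq_ltn_trans (leq0n i) (ltn_ord i).
apply: (@lt_le_trans _ _ N%:R^-1); first by rewrite invr_gt0 ltr0n.
rewrite /inv_load_mean -[X in X <= _](wsumr_const _ (sum_uniform_cellv M_gt0)).
apply: ler_wsum => [c|c]; first by rewrite invr_ge0 ler0n.
by rewrite lef_pV2 ?posrE ?ltr0n ?cell_load_gt0 // ler_nat cell_load_le.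
Qed.

(* The right-hand side is the number of nonempty cells. *)
Lemma sum_scheduled_le c d :
  \sum_i ((scheduled c d i)%:R : R) <= \sum_i ((cell_load c (c i))%:R)^-1.
Proof.
rewrite !(partition_big c xpredT) //=; apply: ler_sum => j _.
rewrite (eq_bigr (fun i => ((d j == Some i)%:R))) => [|i /eqP <-] //.
have load_ge0 : 0 <= \sum_(i | c i == j) ((cell_load c (c i))%:R : R)^-1.
  by apply: sumr_ge0 => i _; rewrite invr_ge0 ler0n.
case: (d j) => [i0|]; last by rewrite big1.
have [<-|ci0] := eqVneq (c i0) j; last first.
  rewrite big1 // => i /eqP ci; apply/eqP; rewrite pnatr_eq0 eqb0.
  by apply: contra_neq ci0 => -[->].
rewrite sum_inv_cell_load (bigD1 i0) //= eqxx big1 ?addr0 // => i /andP[_ ne].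
by apply/eqP; rewrite pnatr_eq0 eqb0 eq_sym (inj_eq Some_inj).
Qed.

Lemma mmw_sum_age_le (p : R) a c d : 0 < p ->
  (forall j : 'I_M, (exists k, c k = j) ->
      exists i : 'I_N, [/\ d j = Some i, c i = j &
        forall k : 'I_N, c k = j -> p * ((a k)%:R ^+ 2) <= p * ((a i)%:R ^+ 2)]) ->
  \sum_i (a i)%:R * ((cell_load c (c i))%:R)^-1 <=
  \sum_i ((scheduled c d i)%:R : R) * (a i)%:R.
Proof.
move=> p_gt0 mmw; rewrite !(partition_big c xpredT) //=; apply: ler_sum => j _.
have [k /eqP ck|empty] := pickP (fun k => c k == j); last by rewrite !big_pred0.
have [i0 [dj ci0 oldest]] := mmw j (ex_intro _ k ck).
rewrite [X in _ <= X](bigD1 i0) ?ci0 //= /scheduled ci0 dj eqxx mul1r.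
rewrite [X in _ <= _ + X]big1 ?addr0 => [|i /andP[/eqP -> ne]]; last first.
  by rewrite dj (inj_eq Some_inj) eq_sym (negbTE ne) mul0r.
rewrite -ci0 -[X in _ <= X]mulr1 -[X in _ <= _ * X](sum_inv_cell_load c i0).
rewrite mulr_sumr.
apply: ler_sum => i /eqP ci; rewrite ci ler_wpM2r ?invr_ge0 ?ler0n //.
have := oldest i (etrans ci ci0).
by rewrite ler_pM2l // ler_sqr ?nnegrE ?ler0n // ler_nat.
Qed.

End Cells.

Section Policy.
Variables (R : realType) (N M : nat) (p : R) (pi : policy R N M).
Implicit Types (H : hist N M) (a : agev N) (f g : hist N M -> agev N -> R).

Lemma expect_fromS n H a f :
  expect_from p pi n.+1 H a f =
  \sum_(c : cellv N M) ((M ^ N)%:R)^-1 * \sum_(d : decv N M) pi H a c d *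
    \sum_(s : {ffun 'I_N -> bool}) succ_weight p s *
      expect_from p pi n (rcons H (c, d, a)) (next_ages a c d s) f.
Proof. by []. Qed.

Lemma eq_expect_from n H a f g :
  (forall H a, f H a = g H a) -> expect_from p pi n H a f = expect_from p pi n H a g.
Proof. by move=> fg; congr expect_from; apply/funext => H'; apply/funext => a'. Qed.

Lemma expect_from_affine n H a f g k :
  expect_from p pi n H a (fun H a => k * f H a + g H a) =
  k * expect_from p pi n H a f + expect_from p pi n H a g.
Proof.
elim: n H a => [//|n IH] H a /=.
under eq_bigr => c _ do under eq_bigr => d _ do under eq_bigr => s _ do rewrite IH.
under eq_bigr => c _ do under eq_bigr => d _ do rewrite wsumr_affine.
by under eq_bigr => c _ do rewrite wsumr_affine; rewrite wsumr_affine.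
Qed.

Lemma expect_fromD n H a f g :
  expect_from p pi n H a (fun H a => f H a + g H a) =
  expect_from p pi n H a f + expect_from p pi n H a g.
Proof.
rewrite -[expect_from _ _ _ _ _ f]mul1r -expect_from_affine.
by apply: eq_expect_from => H' a'; rewrite mul1r.
Qed.

Lemma expect_from_tower n H a f :
  expect_from p pi n.+1 H a f =
  expect_from p pi n H a (fun H' a' => expect_from p pi 1 H' a' f).
Proof.
elim: n H a => [//|n IH] H a; rewrite [LHS]expect_fromS [RHS]expect_fromS.
by under eq_bigr => c _ do under eq_bigr => d _ do under eq_bigr => s _ do rewrite IH.
Qed.

Hypotheses (M_gt0 : (0 < M)%N) (p_gt0 : 0 < p) (p_le1 : p <= 1).
Hypothesis pi_policy : is_policy pi.

Let sum_unif : \sum_(c : cellv N M) ((M ^ N)%:R)^-1 = 1 :> R.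
Proof. exact: sum_uniform_cellv. Qed.
Let pi_ge0 H a c d : 0 <= pi H a c d. Proof. exact: (pi_policy H a c).1. Qed.
Let sum_pi H a c : \sum_d pi H a c d = 1. Proof. exact: (pi_policy H a c).2. Qed.
Let succ_ge0 (s : {ffun 'I_N -> bool}) : 0 <= succ_weight p s.
Proof. exact: succ_weight_ge0 (ltW p_gt0) p_le1. Qed.

Lemma expect_from_cst n H a k : expect_from p pi n H a (fun _ _ => k) = k.
Proof.
elim: n H a => [//|n IH] H a /=.
under eq_bigr => c _ do under eq_bigr => d _ do under eq_bigr => s _ do rewrite IH.
under eq_bigr => c _ do
  under eq_bigr => d _ do rewrite (wsumr_const _ (sum_succ_weight _ _)).
by under eq_bigr => c _ do rewrite wsumr_const //; rewrite wsumr_const.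
Qed.

Lemma ler_expect_from n H a f g :
  (forall H a, f H a <= g H a) -> expect_from p pi n H a f <= expect_from p pi n H a g.
Proof.
move=> fg; elim: n H a => [//|n IH] H a /=.
by apply: ler_wsum => // c; apply: ler_wsum => // d; apply: ler_wsum.
Qed.

Lemma expect_from_sum n H a (J : Type) (r : seq J)
    (F : J -> hist N M -> agev N -> R) :
  expect_from p pi n H a (fun H a => \sum_(j <- r) F j H a) =
  \sum_(j <- r) expect_from p pi n H a (F j).
Proof.
elim: r => [|j r IH].
  rewrite big_nil -[RHS](expect_from_cst n H a).
  by apply: eq_expect_from => H' a'; rewrite big_nil.
rewrite big_cons -IH -expect_fromD.
by apply: eq_expect_from => H' a'; rewrite big_cons.
Qed.

Definition sched_prob H a i : R :=
  \sum_(c : cellv N M) ((M ^ N)%:R)^-1 *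
    \sum_(d : decv N M) pi H a c d * (scheduled c d i)%:R.

Lemma sched_prob_ge0 H a i : 0 <= sched_prob H a i.
Proof. by apply: wsumr_ge0 => // c; apply: wsumr_ge0 => // d; rewrite ler0n. Qed.

Lemma expect_age_step (phi : R -> R) i H a :
  expect_from p pi 1 H a (fun _ a' => phi (a' i)%:R) =
  p * (phi 1 - phi ((a i)%:R + 1)) * sched_prob H a i + phi ((a i)%:R + 1).
Proof.
have step c d : \sum_(s : {ffun 'I_N -> bool}) succ_weight p s *
    phi (next_ages a c d s i)%:R =
    p * (phi 1 - phi ((a i)%:R + 1)) * (scheduled c d i)%:R + phi ((a i)%:R + 1).
  under eq_bigr => s _ do rewrite ffunE.
  rewrite (succ_weight_marginal p i
    (fun b => phi (if scheduled c d i && b then 1%N else (a i).+1)%:R)).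
  by case: (scheduled c d i); rewrite /= -[((a i).+1)%:R]natr1 ?mulr1n; ring.
rewrite expect_fromS /sched_prob.
under eq_bigr => c _ do under eq_bigr => d _ do rewrite step.
under eq_bigr => c _ do rewrite wsumr_affine wsumr_const //.
by rewrite wsumr_affine wsumr_const.
Qed.

Lemma sum_sched_prob_mul H a (F : 'I_N -> R) :
  \sum_i sched_prob H a i * F i =
  \sum_(c : cellv N M) ((M ^ N)%:R)^-1 *
     \sum_(d : decv N M) pi H a c d * \sum_i (scheduled c d i)%:R * F i.
Proof.
under eq_bigr => i _ do rewrite mulr_suml.
rewrite exchange_big /=; apply: eq_bigr => c _.
under eq_bigr => i _ do rewrite -mulrA mulr_suml.
rewrite -mulr_sumr exchange_big /=; congr (_ * _); apply: eq_bigr => d _.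
by rewrite mulr_sumr; apply: eq_bigr => i _; rewrite mulrA.
Qed.

Variable i0 : 'I_N.
Local Notation gamma := (inv_load_mean R M i0).

Let gamma_gt0 : 0 < gamma. Proof. exact: inv_load_mean_gt0. Qed.
Let N_gt0 : 0 < N%:R :> R.
Proof. by rewrite ltr0n (leq_ltn_trans (leq0n i0) (ltn_ord i0)). Qed.

Lemma sum_sched_prob_le H a : \sum_i sched_prob H a i <= N%:R * gamma.
Proof.
rewrite (eq_bigr (fun i => sched_prob H a i * 1)) => [|i _]; last by rewrite mulr1.
rewrite sum_sched_prob_mul.
apply: (@le_trans _ _ (\sum_(c : cellv N M) ((M ^ N)%:R)^-1 *
     \sum_(d : decv N M) pi H a c d * \sum_i ((cell_load c (c i))%:R)^-1)).
  apply: ler_wsum => // c; apply: ler_wsum => // d.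
  by under eq_bigr => i _ do rewrite mulr1; apply: sum_scheduled_le.
under eq_bigr => c _ do rewrite wsumr_const // mulr_sumr.
rewrite exchange_big /= (eq_bigr (fun _ => gamma)) => [|i _].
  by rewrite sumr_const card_ord mulr_natl.
exact: inv_load_mean_sym.
Qed.

Definition lyap_term (lam x : R) : R := x ^+ 2 - 2 * (lam + 1) * x.

Definition lyap (lam : R) a : R := \sum_i lyap_term lam (a i)%:R.

Lemma lyap_ge lam a : - (N%:R * (lam + 1) ^+ 2) <= lyap lam a.
Proof.
apply: (@le_trans _ _ (\sum_(i < N) - (lam + 1) ^+ 2)).
  by rewrite sumr_const card_ord mulNrn mulr_natl.
apply: ler_sum => i _.
by have := sqr_ge0 ((a i)%:R - (lam + 1)); rewrite /lyap_term; lra.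
Qed.

Lemma lyap_age_step lam i H a :
  expect_from p pi 1 H a (fun _ a' => lyap_term lam (a' i)%:R) <=
  lyap_term lam (a i)%:R + 2 * (a i)%:R - (2 * lam + 1) +
  p * lam ^+ 2 * sched_prob H a i.
Proof.
(* the slack is exactly p * sched_prob H a i * (a i - lam)^2 *)
rewrite expect_age_step /lyap_term.
have := mulr_ge0 (mulr_ge0 (ltW p_gt0) (sched_prob_ge0 H a i))
  (sqr_ge0 ((a i)%:R - lam)).
lra.
Qed.

Lemma lyap_step lam H a :
  expect_from p pi 1 H a (fun _ a' => lyap lam a') <=
  lyap lam a + 2 * \sum_i (a i)%:R - N%:R * (2 * lam + 1) +
  p * lam ^+ 2 * (N%:R * gamma).
Proof.
rewrite expect_from_sum.
apply: le_trans (ler_sum _ (fun i _ => lyap_age_step lam i H a)) _.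
rewrite 3!big_split /= -!mulr_sumr sumr_const card_ord -[_ *+ N]mulr_natl.
rewrite -/(lyap lam a).
have := ler_wpM2l (mulr_ge0 (ltW p_gt0) (sqr_ge0 lam)) (sum_sched_prob_le H a).
lra.
Qed.

Variable h0 : agev N.

(* the expected total age at slot t + 1, since h(1) = h0 *)
Definition total_age t : R :=
  expect_from p pi t [::] h0 (fun _ a => \sum_i (a i)%:R).

Lemma total_age_ge0 t : 0 <= total_age t.
Proof.
rewrite -(expect_from_cst t [::] h0 0); apply: ler_expect_from => H a.
by apply: sumr_ge0 => i _; apply: ler0n.
Qed.

Lemma avg_AoI_sum T :
  \sum_(1 <= t < T.+1) \sum_i exp_age p pi h0 i t = \sum_(t < T) total_age t.
Proof.
rewrite big_add1 /= big_mkord; apply: eq_bigr => t _.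
by rewrite /total_age expect_from_sum.
Qed.

Lemma lyap_total_age lam T :
  expect_from p pi T [::] h0 (fun _ a => lyap lam a) <=
  lyap lam h0 + 2 * \sum_(t < T) total_age t +
  T%:R * (p * lam ^+ 2 * (N%:R * gamma) - N%:R * (2 * lam + 1)).
Proof.
elim: T => [|T IH]; first by rewrite big_ord0 mulr0 mul0r !addr0.
rewrite expect_from_tower.
apply: (@le_trans _ _ (expect_from p pi T [::] h0 (fun H a =>
    2 * \sum_i (a i)%:R +
    (lyap lam a + (p * lam ^+ 2 * (N%:R * gamma) - N%:R * (2 * lam + 1)))))).
  by apply: ler_expect_from => H a; apply: le_trans (lyap_step lam H a) _; lra.
rewrite expect_from_affine expect_fromD expect_from_cst -/(total_age T).
rewrite big_ord_recr /= -[(T.+1)%:R]natr1; lra.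
Qed.

Lemma avg_AoI_ge : ((((p * gamma)^-1 + 1) / 2)%:E <= avg_AoI p pi h0)%E.
Proof.
set lam := (p * gamma)^-1.
have lam_gt0 : 0 < lam by rewrite invr_gt0 mulr_gt0.
have drift_eq : p * lam ^+ 2 * (N%:R * gamma) = N%:R * lam.
  by rewrite /lam; field; rewrite !gt_eqF.
set C := N%:R * (lam + 1) ^+ 2 + lyap lam h0.
apply: (@limn_esup_ge_inv_nat _ _ _ (C / (2 * N%:R))) => k k_gt0.
have k_gt0' : 0 < k%:R :> R by rewrite ltr0n.
have V_ge : - (N%:R * (lam + 1) ^+ 2) <=
    expect_from p pi k [::] h0 (fun _ a => lyap lam a).
  rewrite -(expect_from_cst k [::] h0 (- _)).
  by apply: ler_expect_from => H a; apply: lyap_ge.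
have := lyap_total_age lam k; rewrite drift_eq avg_AoI_sum natrM => V_le.
rewrite -subr_ge0 (_ : _ - _ = (N%:R * k%:R)^-1 / 2 *
  (2 * \sum_(t < k) total_age t - (k%:R * (N%:R * (lam + 1)) - C))); last first.
  by rewrite /C; field; rewrite !gt_eqF.
by apply: mulr_ge0; [rewrite divr_ge0 ?invr_ge0 ?mulr_ge0 ?ler0n | rewrite /C; lra].
Qed.

Hypothesis pi_MMW : is_MMW p pi.

Lemma mmw_sched_prob_age_ge H a :
  gamma * \sum_i (a i)%:R <= \sum_i sched_prob H a i * (a i)%:R.
Proof.
rewrite sum_sched_prob_mul mulr_sumr.
rewrite (eq_bigr (fun i => (a i)%:R * inv_load_mean R M i)) => [|i _]; last first.
  by rewrite (inv_load_mean_sym _ _ i0 i) mulrC.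
under eq_bigr => i _ do rewrite /inv_load_mean mulr_sumr.
rewrite exchange_big /=; apply: ler_sum => c _.
under eq_bigr => i _ do rewrite mulrCA.
rewrite -mulr_sumr ler_wpM2l // -[X in X <= _](wsumr_const _ (sum_pi H a c)).
apply: ler_sum => d _.
have [->|pi_d] := eqVneq (pi H a c d) 0; first by rewrite !mul0r.
by rewrite ler_wpM2l // (mmw_sum_age_le p_gt0 (pi_MMW pi_d)).
Qed.

Lemma mmw_sum_age_step H a :
  expect_from p pi 1 H a (fun _ a' => \sum_i (a' i)%:R) <=
  (1 - p * gamma) * \sum_i (a i)%:R + N%:R.
Proof.
rewrite expect_from_sum.
rewrite (eq_bigr (fun i => (a i)%:R + 1 - p * (sched_prob H a i * (a i)%:R)))
  => [|i _]; last by rewrite (expect_age_step (fun x => x)); ring.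
rewrite sumrB big_split sumr_const card_ord -mulr_sumr /=.
have := ler_wpM2l (ltW p_gt0) (mmw_sched_prob_age_ge H a); lra.
Qed.

Lemma mmw_total_age_sum T :
  p * gamma * \sum_(t < T) total_age t + total_age T <= total_age 0 + N%:R * T%:R.
Proof.
elim: T => [|T IH]; first by rewrite big_ord0 !mulr0 add0r addr0.
have step : total_age T.+1 <= (1 - p * gamma) * total_age T + N%:R.
  rewrite /total_age expect_from_tower.
  apply: (le_trans (ler_expect_from _ _ _ mmw_sum_age_step)).
  by rewrite expect_from_affine expect_from_cst.
rewrite big_ord_recr /= -natr1; nra.
Qed.

Lemma mmw_avg_AoI_le : (avg_AoI p pi h0 <= ((p * gamma)^-1)%:E)%E.
Proof.
set q := p * gamma; have q_gt0 : 0 < q by rewrite mulr_gt0.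
apply: (@limn_esup_le_inv_nat _ _ _ (q^-1 * total_age 0 / N%:R)) => k k_gt0.
have k_gt0' : 0 < k%:R :> R by rewrite ltr0n.
have := mmw_total_age_sum k; have := total_age_ge0 k.
rewrite avg_AoI_sum natrM -/q => S_ge0 S_le.
rewrite -subr_ge0 (_ : _ - _ = (q * N%:R * k%:R)^-1 *
  (total_age 0 + N%:R * k%:R - q * \sum_(t < k) total_age t)); last first.
  by field; rewrite !gt_eqF.
by apply: mulr_ge0; [rewrite invr_ge0 !mulr_ge0 ?ler0n ?ltW | lra].
Qed.

End Policy.

Theorem theorem1 (R : realType) (N M : nat) (p : R) (h0 : agev N)
  (pi : policy R N M) :
  (0 < N)%N -> (0 < M)%N -> 0 < p -> p <= 1 ->
  (forall i, (1 <= h0 i)%N) ->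
  is_policy pi -> is_MMW p pi ->
  (avg_AoI p pi h0 <= 2%:E * @opt_AoI R N M p h0)%E.
Proof.
(* the initial ages only enter through terms that vanish as T grows *)
move=> N_gt0 M_gt0 p_gt0 p_le1 _ pi_policy pi_MMW.
pose i0 : 'I_N := Ordinal N_gt0.
set lam := (p * inv_load_mean R M i0)^-1.
have opt_ge : (((lam + 1) / 2)%:E <= @opt_AoI R N M p h0)%E.
  apply: le_ereal_inf_tmp => _ [pi' pi'_policy <-].
  exact: avg_AoI_ge M_gt0 p_gt0 p_le1 pi'_policy i0 h0.
apply: le_trans (mmw_avg_AoI_le M_gt0 p_gt0 p_le1 pi_policy i0 h0 pi_MMW) _.
apply: le_trans (lee_wpmul2l _ opt_ge); last by rewrite lee_fin ler0n.
by rewrite -EFinM lee_fin -/lam; lra.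
Qed.
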